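(* Let $\omega$ be a weight on $\mathbb N^2$, and let $(r_i)$, $(s_i)$ be sequences of positive real numbers such that $$r_{i_1}^{\alpha_1}\cdots r_{i_k}^{\alpha_k}s_{i_1}^{\beta_1}\cdots s_{i_k}^{\beta_k}\le\omega\big(p_{i_1}^{\alpha_1}\cdots p_{i_k}^{\alpha_k},\,p_{i_1}^{\beta_1}\cdots p_{i_k}^{\beta_k}\big)$$ whenever $k\in\mathbb N$, the $p_{i_j}$ are distinct primes and $\alpha_j,\beta_j\in\mathbb N_0$. Then, under the identification of $\Delta(\ell^1(\mathbb N^2,\omega))$ with pairs of complex sequences, $$\prod_{i=1}^\infty\overline{B(0,r_i)}\times\prod_{i=1}^\infty\overline{B(0,s_i)}\subset\Delta(\ell^1(\mathbb N^2,\omega))\subset\prod_{i=1}^\infty\overline{B(0,\rho_i)}\times\prod_{i=1}^\infty\overline{B(0,\mu_i)}.$$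
   Context: $\mathbb N_0=\mathbb N\cup\{0\}$; $p_1<p_2<\cdots$ are the primes in increasing order; $\overline{B(a,r)}=\{z\in\mathbb C:|z-a|\le r\}$. A weight on $\mathbb N^2$ (semigroup under coordinatewise multiplication) is $\omega:\mathbb N^2\to[1,\infty)$ with $\omega(xy)\le\omega(x)\omega(y)$. $\rho_i=\lim_{n\to\infty}\omega(p_i^n,1)^{1/n}=\inf_n\omega(p_i^n,1)^{1/n}$ and $\mu_i=\lim_{n\to\infty}\omega(1,p_i^n)^{1/n}=\inf_n\omega(1,p_i^n)^{1/n}$. $\ell^1(\mathbb N^2,\omega)$ is the weighted convolution algebra $\{a:\sum|a(m,n)|\omega(m,n)<\infty\}$ with $(a\star b)(m,n)=\sum_{u_1u_2=m,v_1v_2=n}a(u_1,v_1)b(u_2,v_2)$. Its Gel'fand space $\Delta(\ell^1(\mathbb N^2,\omega))$ is identified with the set of $\omega$-bounded semicharacters $\chi$ (nonzero multiplicative maps $\mathbb N^2\to\mathbb C$ with $|\chi|\le\omega$), and each such $\chi$ is identified with the pair of sequences $((\chi(p_i,1))_i,(\chi(1,p_i))_i)\in\mathbb C^{\mathbb N}\times\mathbb C^{\mathbb N}$; a pair of sequences lies in $\Delta$ iff the semicharacter it determines is $\omega$-bounded. *)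

From HB Require Import structures.
From mathcomp Require Import all_boot all_order all_algebra.
From mathcomp Require Import all_classical all_reals.
From mathcomp Require Import exp.
From mathcomp Require Import complex.

Set Implicit Arguments.
Unset Strict Implicit.
Unset Printing Implicit Defensive.

Import Order.TTheory GRing.Theory Num.Theory.
Local Open Scope ring_scope.

(* the least prime > m (searched in (m, m`! + 1], where one always exists) *)
Definition next_prime (m : nat) : nat :=
  (m.+1 + find (fun k => prime (m.+1 + k)) (iota 0 (m`!).+1))%N.

(* nth_prime i = p_i for i >= 1 (nth_prime 0 = 0 is a dummy value):
   p_1 = 2, p_2 = 3, ... *)
Fixpoint nth_prime (i : nat) : nat :=
  match i with
  | 0 => 0%N
  | i'.+1 => next_prime (nth_prime i')
  end.

Definition posN2 (x : nat * nat) : Prop := (0 < x.1)%N /\ (0 < x.2)%N.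

Definition mulN2 (x y : nat * nat) : nat * nat := (x.1 * y.1, x.2 * y.2)%N.

Definition is_weight (R : realType) (omega : nat * nat -> R) : Prop :=
  (forall x, posN2 x -> 1 <= omega x) /\
  (forall x y, posN2 x -> posN2 y -> omega (mulN2 x y) <= omega x * omega y).

Definition is_semicharacter (R : realType) (chi : nat * nat -> R[i]) : Prop :=
  (exists x, posN2 x /\ chi x != 0) /\
  (forall x y, posN2 x -> posN2 y -> chi (mulN2 x y) = chi x * chi y).

Definition omega_bounded (R : realType) (omega : nat * nat -> R)
  (chi : nat * nat -> R[i]) : Prop :=
  forall x, posN2 x -> `|chi x| <= (omega x)%:C%C.

(* Gel'fand space of l^1(N^2, omega), identified with pairs of sequences
   ((chi(p_i,1))_i, (chi(1,p_i))_i) (indices i >= 1 relevant). *)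
Definition Delta (R : realType) (omega : nat * nat -> R)
  : set ((nat -> R[i]) * (nat -> R[i])) :=
  [set ab | exists chi : nat * nat -> R[i],
     [/\ is_semicharacter chi, omega_bounded omega chi,
         forall i, (0 < i)%N -> ab.1 i = chi (nth_prime i, 1%N) &
         forall i, (0 < i)%N -> ab.2 i = chi (1%N, nth_prime i)]].

Definition rho (R : realType) (omega : nat * nat -> R) (i : nat) : R :=
  inf [set omega (nth_prime i ^ n, 1)%N `^ (n%:R)^-1 | n in [set n : nat | (0 < n)%N]].

Definition mu (R : realType) (omega : nat * nat -> R) (i : nat) : R :=
  inf [set omega (1, nth_prime i ^ n)%N `^ (n%:R)^-1 | n in [set n : nat | (0 < n)%N]].

Definition polydisc_pair (R : realType) (r s : nat -> R)
  : set ((nat -> R[i]) * (nat -> R[i])) :=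
  [set ab | (forall i, (0 < i)%N -> `|ab.1 i| <= (r i)%:C%C) /\
            (forall i, (0 < i)%N -> `|ab.2 i| <= (s i)%:C%C)].

From HB Require Import structures.
From mathcomp Require Import all_boot all_order all_algebra.
From mathcomp Require Import all_classical all_reals.
From mathcomp Require Import exp.
From mathcomp Require Import complex.
From mathcomp Require Import zify.

Import Order.TTheory GRing.Theory Num.Theory.
Local Open Scope ring_scope.
Local Open Scope classical_set_scope.

(* Given a in prod B(0, r_i) and b in prod B(0, s_i), unique factorisation defines the
   semicharacter chi(m, n) = prod_i a_i^(v_(p_i) m) b_i^(v_(p_i) n), and the hypothesis on
   (r, s) applied to the factorisations of m and n bounds |chi(m, n)| by omega(m, n).
   Conversely, for an omega-bounded semicharacter chi, multiplicativity gives
   |chi(p_i, 1)|^n = |chi(p_i^n, 1)| <= omega(p_i^n, 1), so |chi(p_i, 1)| <= rho_i;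
   likewise |chi(1, p_i)| <= mu_i. *)

Lemma next_primeP m :
  [/\ prime (next_prime m), (m < next_prime m)%N &
      forall q, (m < q < next_prime m)%N -> ~~ prime q].
Proof.
set P := fun k => prime (m.+1 + k).
have hasP : has P (iota 0 (m`!).+1).
  have /pdivP[p p_pr p_dvd] : (1 < m`! + 1)%N by rewrite addn1 ltnS fact_gt0.
  have m_lt_p : (m < p)%N.
    rewrite ltnNge; apply: contraL p_dvd => p_le_m.
    by rewrite dvdn_addr ?dvdn_fact ?prime_gt0 // gtnNdvd ?prime_gt1.
  have := dvdn_leq (ltn_addl _ (ltn0Sn 0)) p_dvd => p_le.
  apply/hasP; exists (p - m.+1)%N; first by rewrite mem_iota; lia.
  by rewrite /P subnKC.
have := nth_find 0 hasP; rewrite has_find size_iota in hasP.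
rewrite /next_prime -/P nth_iota // add0n => next_pr.
split=> // [|q /andP[m_lt_q q_lt]]; first lia.
have q_idx : (q - m.+1 < find P (iota 0 (m`!).+1))%N by lia.
by have := before_find 0 q_idx; rewrite /P nth_iota ?add0n ?subnKC //; lia.
Qed.

Arguments nth_prime : simpl never.

Lemma nth_prime_prime {i} : (0 < i)%N -> prime (nth_prime i).
Proof. by case: i => // i _; case: (next_primeP (nth_prime i)). Qed.

Lemma nth_prime_ltnS i : (nth_prime i < nth_prime i.+1)%N.
Proof. by case: (next_primeP (nth_prime i)). Qed.

Lemma nth_prime_homo : {homo nth_prime : i j / (i < j)%N}.
Proof. exact: homo_ltn ltn_trans nth_prime_ltnS. Qed.

Lemma nth_prime_inj : injective nth_prime.
Proof. exact/incn_inj/leq_mono/nth_prime_homo. Qed.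

Lemma leq_nth_prime i : (i <= nth_prime i)%N.
Proof. by elim: i => // i IH; apply: leq_ltn_trans IH (nth_prime_ltnS i). Qed.

Lemma nth_prime_onto {p} : prime p -> exists2 i, (0 < i)%N & nth_prime i = p.
Proof.
move=> p_pr; have := leq_nth_prime p; elim: {2}p => [|n IH].
  by rewrite leqn0 => /eqP p0; move: p_pr; rewrite p0.
case: (leqP p (nth_prime n)) => [le_p _|lt_p]; first exact: IH.
rewrite leq_eqVlt => /predU1P[->|]; first by exists n.+1.
by have [_ _ /(_ p)] := next_primeP (nth_prime n); rewrite lt_p p_pr => /[apply].
Qed.

Lemma logn_eq0_gt q m : (m < q)%N -> logn q m = 0%N.
Proof.
move=> lt_mq; apply/eqP; rewrite -leqn0 leqNgt logn_gt0 mem_primes.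
by apply/and3P => -[_ m_gt0 /(dvdn_leq m_gt0)]; rewrite leqNgt lt_mq.
Qed.

Lemma prod_nth_prime_gt0 N (e : nat -> nat) :
  (0 < \prod_(j < N) nth_prime j.+1 ^ e j)%N.
Proof. by apply/prodn_gt0 => j; rewrite expn_gt0 prime_gt0 ?nth_prime_prime. Qed.

Lemma logn_prod_nth_prime q N (e : nat -> nat) :
  logn q (\prod_(j < N) nth_prime j.+1 ^ e j)%N =
  (\sum_(j < N) e j * (q == nth_prime j.+1))%N.
Proof.
elim: N => [|N IH]; first by rewrite !big_ord0 logn1.
have pN_pr := nth_prime_prime (ltn0Sn N).
by rewrite !big_ord_recr lognM ?IH ?lognX ?logn_prime ?prod_nth_prime_gt0 //
   expn_gt0 prime_gt0.
Qed.

(* The prime factors of m are at most m <= N, hence among p_1, ..., p_N. *)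
Lemma prod_nth_prime_logn m N : (0 < m)%N -> (m <= N)%N ->
  (\prod_(j < N) nth_prime j.+1 ^ logn (nth_prime j.+1) m)%N = m.
Proof.
move=> m_gt0 le_mN; apply: eqn_from_log => // [|q].
  exact: (prod_nth_prime_gt0 N (fun j => logn (nth_prime j.+1) m)).
rewrite (logn_prod_nth_prime q N (fun j => logn (nth_prime j.+1) m)).
have -> : (\sum_(j < N) logn (nth_prime j.+1) m * (q == nth_prime j.+1) =
           logn q m * \sum_(j < N) (q == nth_prime j.+1))%N.
  by rewrite big_distrr; apply: eq_bigr => j _; case: eqP => [->|_] //=; rewrite !muln0.
have [-> //|] := posnP (logn q m).
rewrite logn_gt0 mem_primes => /and3P[q_pr _ q_dvd].
have [i i_gt0 def_q] := nth_prime_onto q_pr; subst q.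
have lt_iN : (i.-1 < N)%N.
  have := leq_nth_prime i; have := dvdn_leq m_gt0 q_dvd; lia.
rewrite (bigD1 (Ordinal lt_iN)) //= prednK // eqxx big1 ?muln1 ?addn0 //.
move=> j /eqP ne_ji; case: eqP => // /nth_prime_inj eq_ij.
by case: ne_ji; apply: val_inj => /=; lia.
Qed.

Section SemicharacterOfSequences.
Variables (R : realType) (a b : nat -> R[i]).

(* [charN2 a b (m, n)] is prod_i a_i^(v_(p_i) m) b_i^(v_(p_i) n); truncating the product
   at the first m + n primes loses no prime factor of m or n. *)
Definition char_upto (N m n : nat) : R[i] :=
  \prod_(j < N) (a j.+1 ^+ logn (nth_prime j.+1) m * b j.+1 ^+ logn (nth_prime j.+1) n).

Definition charN2 (x : nat * nat) : R[i] := char_upto (x.1 + x.2) x.1 x.2.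

Lemma char_upto_stable N m n : (m + n <= N)%N -> char_upto N m n = char_upto (m + n) m n.
Proof.
move=> /subnKC <-; elim: (N - (m + n))%N => [|d IH]; first by rewrite addn0.
rewrite addnS /char_upto big_ord_recr /= -/(char_upto _ m n) IH.
by rewrite !logn_eq0_gt ?expr0 ?mulr1 //; apply: leq_trans (leq_nth_prime _); lia.
Qed.

Lemma char_uptoM N m m' n n' : (0 < m)%N -> (0 < m')%N -> (0 < n)%N -> (0 < n')%N ->
  char_upto N (m * m') (n * n') = char_upto N m n * char_upto N m' n'.
Proof.
move=> m_gt0 m'_gt0 n_gt0 n'_gt0; rewrite /char_upto -big_split; apply: eq_bigr => j _.
by rewrite !lognM // !exprD mulrACA.
Qed.

Lemma char_upto_prime_pow N i al be : (0 < i <= N)%N ->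
  char_upto N (nth_prime i ^ al) (nth_prime i ^ be) = a i ^+ al * b i ^+ be.
Proof.
move=> /andP[i_gt0 le_iN]; have lt_iN : (i.-1 < N)%N by lia.
rewrite /char_upto (bigD1 (Ordinal lt_iN)) //= prednK // !pfactorK ?nth_prime_prime //.
rewrite big1 ?mulr1 // => j /eqP ne_ji; rewrite !lognX logn_prime ?nth_prime_prime //.
case: eqP => [/nth_prime_inj eq_ji|_]; last by rewrite !muln0 !expr0 mulr1.
by case: ne_ji; apply: val_inj => /=; lia.
Qed.

Lemma charN2_semicharacter : is_semicharacter charN2.
Proof.
split.
  exists (1, 1)%N; split => //.
  by rewrite /charN2 /char_upto big1 ?oner_neq0 // => j _; rewrite logn1 mulr1.
move=> [m n] [m' n'] [/= m_gt0 n_gt0] [/= m'_gt0 n'_gt0]; rewrite /charN2 /mulN2 /=.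
set K := (m * m' + n * n' + (m + n) + (m' + n'))%N.
rewrite -(@char_upto_stable K (m * m')); last by rewrite /K; lia.
by rewrite char_uptoM // -(@char_upto_stable K) -?(@char_upto_stable K m') // /K; lia.
Qed.

Lemma charN2_prime_l i : (0 < i)%N -> charN2 (nth_prime i, 1)%N = a i.
Proof.
move=> i_gt0; have := @char_upto_prime_pow (nth_prime i + 1) i 1 0.
rewrite expn1 expn0 expr1 expr0 mulr1; apply.
by rewrite i_gt0 (leq_trans (leq_nth_prime i)) ?leq_addr.
Qed.

Lemma charN2_prime_r i : (0 < i)%N -> charN2 (1, nth_prime i)%N = b i.
Proof.
move=> i_gt0; have := @char_upto_prime_pow (1 + nth_prime i) i 0 1.
rewrite expn1 expn0 expr1 expr0 mul1r; apply.
by rewrite i_gt0 (leq_trans (leq_nth_prime i)) ?leq_addl.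
Qed.

End SemicharacterOfSequences.

Arguments charN2 {R}.

Definition monomials_bounded {R : realType} (omega : nat * nat -> R) (r s : nat -> R) :=
  forall (k : nat) (idx : 'I_k -> nat) (al be : 'I_k -> nat),
    (0 < k)%N -> injective idx -> (forall j, (0 < idx j)%N) ->
    \prod_(j < k) (r (idx j) ^+ al j * s (idx j) ^+ be j)
      <= omega (\prod_(j < k) nth_prime (idx j) ^ al j,
                \prod_(j < k) nth_prime (idx j) ^ be j)%N.

Lemma charN2_bounded (R : realType) (omega : nat * nat -> R) (r s : nat -> R)
    (a b : nat -> R[i]) :
  monomials_bounded omega r s ->
  (forall i, (0 < i)%N -> `|a i| <= (r i)%:C%C) ->
  (forall i, (0 < i)%N -> `|b i| <= (s i)%:C%C) ->
  omega_bounded omega (charN2 a b).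
Proof.
move=> dom_rs le_ar le_bs [m n] [/= m_gt0 n_gt0]; set N := (m + n)%N.
have N_gt0 : (0 < N)%N by rewrite addn_gt0 m_gt0.
have idx_inj : injective (fun j : 'I_N => (nat_of_ord j).+1).
  by move=> j1 j2 [] /val_inj.
have := dom_rs N _ (fun j => logn (nth_prime j.+1) m) (fun j => logn (nth_prime j.+1) n)
  N_gt0 idx_inj (fun j => ltn0Sn _).
rewrite !prod_nth_prime_logn ?leq_addr ?leq_addl // -lecR rmorph_prod; apply: le_trans.
rewrite /charN2 /char_upto normr_prod; apply: ler_prod => j _.
rewrite normrM !normrX rmorphM !rmorphXn mulr_ge0 ?exprn_ge0 //=.
have r_ge0 := le_trans (normr_ge0 _) (le_ar _ (ltn0Sn j)).
have s_ge0 := le_trans (normr_ge0 _) (le_bs _ (ltn0Sn j)).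
by rewrite ler_pM ?exprn_ge0 ?lerXn2r ?nnegrE ?le_ar ?le_bs.
Qed.

Lemma le_inf_root (R : realType) (t : R) (w : nat -> R) :
  0 <= t -> (forall n, (0 < n)%N -> t ^+ n <= w n) ->
  t <= inf [set w n `^ (n%:R)^-1 | n in [set n : nat | (0 < n)%N]].
Proof.
move=> t_ge0 le_tw; apply: lb_le_inf => [|_ [n /= n_gt0 <-]].
  by exists (w 1%N `^ (1%:R)^-1), 1%N.
have -> : t = (t ^+ n) `^ (n%:R)^-1.
  by rewrite -powR_mulrn // -powRrM divff ?powRr1 // pnatr_eq0 -lt0n.
have tn_ge0 := exprn_ge0 n t_ge0.
by rewrite ge0_ler_powR ?nnegrE ?invr_ge0 ?ler0n ?le_tw // (le_trans tn_ge0) ?le_tw.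
Qed.

Section SemicharacterBounds.
Variables (R : realType) (chi : nat * nat -> R[i]).
Hypothesis chiM : forall x y, posN2 x -> posN2 y -> chi (mulN2 x y) = chi x * chi y.

Lemma semichar_expn m n k : (0 < m)%N -> (0 < n)%N -> (0 < k)%N ->
  chi (m ^ k, n ^ k)%N = chi (m, n) ^+ k.
Proof.
move=> m_gt0 n_gt0; elim: k => // -[_ _|k IH _]; first by rewrite !expn1 expr1.
rewrite (expnS m) (expnS n) exprS -IH // -chiM //.
by split; rewrite /= expn_gt0 ?m_gt0 ?n_gt0.
Qed.

Lemma norm_semichar_le_inf (omega : nat * nat -> R) m n :
  omega_bounded omega chi -> (0 < m)%N -> (0 < n)%N ->
  `|chi (m, n)| <=
    (inf [set omega (m ^ k, n ^ k)%N `^ (k%:R)^-1 | k in [set k : nat | (0 < k)%N]])%:C%C.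
Proof.
move=> chi_bd m_gt0 n_gt0; rewrite normc_def lecR.
apply: le_inf_root => [|k k_gt0]; first exact: sqrtr_ge0.
have := chi_bd (m ^ k, n ^ k)%N; rewrite semichar_expn // normrX normc_def -rmorphXn lecR.
by apply; split; rewrite /= expn_gt0 ?m_gt0 ?n_gt0.
Qed.

End SemicharacterBounds.

Arguments norm_semichar_le_inf {R chi}.

Lemma Delta_sub_polydisc_rho_mu (R : realType) (omega : nat * nat -> R) :
  Delta omega `<=` polydisc_pair (rho omega) (mu omega).
Proof.
move=> [a b] [chi [[_ chiM] chi_bd eq_a eq_b]].
split=> i i_gt0; have p_gt0 := prime_gt0 (nth_prime_prime i_gt0).
- rewrite eq_a //.
  move: (norm_semichar_le_inf chiM omega _ _ chi_bd p_gt0 (ltn0Sn 0)) => /le_trans; apply.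
  by rewrite lecR /rho; under eq_imagel => k _ do rewrite exp1n.
- rewrite eq_b //.
  move: (norm_semichar_le_inf chiM omega _ _ chi_bd (ltn0Sn 0) p_gt0) => /le_trans; apply.
  by rewrite lecR /mu; under eq_imagel => k _ do rewrite exp1n.
Qed.

Lemma polydisc_sub_Delta (R : realType) (omega : nat * nat -> R) (r s : nat -> R) :
  monomials_bounded omega r s ->
  polydisc_pair r s `<=` Delta omega.
Proof.
move=> dom_rs [a b] [/= le_ar le_bs]; exists (charN2 a b); split.
- exact: charN2_semicharacter.
- exact: charN2_bounded dom_rs le_ar le_bs.
- by move=> i /charN2_prime_l ->.
- by move=> i /charN2_prime_r ->.
Qed.

Theorem mainTheorem5 (R : realType) (omega : nat * nat -> R) (r s : nat -> R) :
  is_weight omega ->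
  (forall i, (0 < i)%N -> 0 < r i) ->
  (forall i, (0 < i)%N -> 0 < s i) ->
  (forall (k : nat) (idx : 'I_k -> nat) (al be : 'I_k -> nat),
      (0 < k)%N -> injective idx -> (forall j, (0 < idx j)%N) ->
      (\prod_(j < k) (r (idx j) ^+ al j * s (idx j) ^+ be j))%R
        <= omega (\prod_(j < k) nth_prime (idx j) ^ al j,
                  \prod_(j < k) nth_prime (idx j) ^ be j)%N) ->
  polydisc_pair r s `<=` Delta omega /\
  Delta omega `<=` polydisc_pair (rho omega) (mu omega).
Proof.
move=> _ _ _ dom_rs; split; [exact: polydisc_sub_Delta | exact: Delta_sub_polydisc_rho_mu].
Qed.
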